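(* Suppose that $f$ is continuously differentiable with $\nabla f$ Lipschitz continuous with constant $L_{\nabla f}$. Then, for every iteration $k$ of CLARSTA, the model $\widehat m_k$ belongs to a class of $(\mathcal{C},\boldsymbol{Q}_k)$-fully linear models of $f$ at $\boldsymbol{x}_k$ parameterized by $\Delta_k\in(0,\Delta_{\max}]$, with constants $$\kappa_{ef}=\left(\tfrac12L_{\nabla f}\left(1+\sqrt{p}M_{\widehat{\boldsymbol{R}}^{-1}}\right)\right)\epsilon_{\mathrm{rad}}^2,\qquad\kappa_{eg}=\left(\tfrac12L_{\nabla f}\left(2+\sqrt{p}M_{\widehat{\boldsymbol{R}}^{-1}}\right)\right)\epsilon_{\mathrm{rad}},$$ where $M_{\widehat{\boldsymbol{R}}^{-1}}=\max\{1/\epsilon_{\mathrm{geo}},1/\Delta_{\min}\}\epsilon_{\mathrm{rad}}\Delta_{\max}$; that is, for all $\widehat{\boldsymbol{s}}\in\boldsymbol{Q}_k^\top(\mathcal{C}-\boldsymbol{x}_k)$ with $\|\widehat{\boldsymbol{s}}\|\le\Delta_k$, $|f(\boldsymbol{x}_k+\boldsymbol{Q}_k\widehat{\boldsymbol{s}})-\widehat m_k(\widehat{\boldsymbol{s}})|\le\kappa_{ef}\Delta_k^2$ and $\max_{\boldsymbol{d}\in\boldsymbol{Q}_k^\top(\mathcal{C}-\boldsymbol{x}_k),\|\boldsymbol{d}\|\le1}|(\boldsymbol{Q}_k^\top\nabla f(\boldsymbol{x}_k+\boldsymbol{Q}_k\widehat{\boldsymbol{s}})-\nabla\widehat m_k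(\widehat{\boldsymbol{s}}))^\top\boldsymbol{d}|\le\kappa_{eg}\Delta_k$.
   Context: Problem: minimize $f:\mathbb{R}^n\to\mathbb{R}$ over $\mathcal{C}\subseteq\mathbb{R}^n$, closed convex with nonempty interior. $\|\cdot\|$ Euclidean/spectral norm; $\mathrm{proj}_{\mathcal{C}}$ Euclidean projection; $\sigma_{\min}$ smallest singular value. QR-factorizations $\boldsymbol{D}=\boldsymbol{Q}\boldsymbol{R}$ of full-column-rank $\boldsymbol{D}\in\mathbb{R}^{n\times p}$ have $\boldsymbol{Q}$ with orthonormal columns and invertible $\boldsymbol{R}$. $\boldsymbol{Q}^\top(\mathcal{C}-\boldsymbol{x})=\{\boldsymbol{Q}^\top(\boldsymbol{z}-\boldsymbol{x}):\boldsymbol{z}\in\mathcal{C}\}$. Algorithm CLARSTA. Parameters: integers $1\le p_{\mathrm{rand}}\le p\le n$; $\boldsymbol{x}_0\in\mathcal{C}$; $\Delta_0>0$; $0<\Delta_{\min}\le\Delta_{\max}$; $\gamma_{\mathrm{dec}}\in(0,1)$; $\gamma_{\mathrm{inc}}^k\ge1$; $0<\eta_1\le\eta_2<1$; $\mu>0$; $\epsilon_{\mathrm{rad}}\ge1$; $\epsilon_{\mathrm{geo}}>0$. GEN$(q,\Delta,\boldsymbol{Q})$ ($\boldsymbol{Q}$ optional, orthonormal columns): draw $\boldsymbol{A}\in\mathbb{R}^{n\times q}$ with i.i.d. $\mathcal{N}(0,1)$ entries, of full column rank; $\widetilde{\boldsymbol{A}}=\boldsymbol{A}-\boldsymbol{Q}\boldsymbol{Q}^\top\boldsymbol{A}$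 if $\boldsymbol{Q}$ given, else $\boldsymbol{A}$; QR $\widetilde{\boldsymbol{A}}=[\widetilde{\boldsymbol{q}}_1\cdots\widetilde{\boldsymbol{q}}_q]\widetilde{\boldsymbol{R}}$; return $\Delta\widetilde{\boldsymbol{q}}_1,\dots,\Delta\widetilde{\boldsymbol{q}}_q$. REMOVE$(\boldsymbol{D}^U,\Delta,r)$: repeat $r$ times: for $\boldsymbol{D}^U=[\boldsymbol{d}_1\cdots\boldsymbol{d}_m]$ let $\boldsymbol{M}_i$ be $\boldsymbol{D}^U$ without column $i$, $\theta_i=\sigma_{\min}(\boldsymbol{M}_i)\max(\|\boldsymbol{d}_i\|^4/\Delta^4,1)$; delete the column with largest $\theta_i$. Initialization: $\boldsymbol{D}_0$ = columns GEN$(p,\Delta_0)$. Iteration $k$: QR $\boldsymbol{D}_k=[\boldsymbol{d}_1\cdots\boldsymbol{d}_p]=\boldsymbol{Q}_k\boldsymbol{R}_k$, $\boldsymbol{R}_k=[\boldsymbol{r}_1\cdots\boldsymbol{r}_p]$; $\widehat f_k(\widehat{\boldsymbol{s}})=f(\boldsymbol{x}_k+\boldsymbol{Q}_k\widehat{\boldsymbol{s}})$; $\widehat m_k(\widehat{\boldsymbol{s}})=\widehat f_k(\boldsymbol{0}_p)+\boldsymbol{g}_k^\top\widehat{\boldsymbol{s}}$, $\boldsymbol{g}_k=(\boldsymbol{R}_k^\top)^{-1}\boldsymbol{\delta}_k$, $(\boldsymbol{\delta}_k)_i=\widehat f_k(\boldsymbol{r}_i)-\widehat f_k(\boldsymbol{0}_p)$;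 $\pi^m(\boldsymbol{x}_k)=\left|\min_{\boldsymbol{d}\in\boldsymbol{Q}_k^\top(\mathcal{C}-\boldsymbol{x}_k),\|\boldsymbol{d}\|\le1}\nabla\widehat m_k(\boldsymbol{0}_p)^\top\boldsymbol{d}\right|$. If $\Delta_k\le\mu\pi^m(\boldsymbol{x}_k)$: approximately solve $\min\{\widehat m_k(\widehat{\boldsymbol{s}}):\widehat{\boldsymbol{s}}\in\boldsymbol{Q}_k^\top\mathcal{C},\|\widehat{\boldsymbol{s}}\|\le\Delta_k\}$ giving $\widehat{\boldsymbol{s}}_k$; $\boldsymbol{s}_k=\mathrm{proj}_{\mathcal{C}}(\boldsymbol{x}_k+\boldsymbol{Q}_k\widehat{\boldsymbol{s}}_k)-\boldsymbol{x}_k$; $\rho_k=\frac{f(\boldsymbol{x}_k)-f(\boldsymbol{x}_k+\boldsymbol{s}_k)}{\widehat m_k(\boldsymbol{0}_p)-\widehat m_k(\widehat{\boldsymbol{s}}_k)}$; $\Delta_{k+1}=\gamma_{\mathrm{dec}}\Delta_k$ if $\rho_k<\eta_1$, $\min(\gamma^k_{\mathrm{inc}}\Delta_k,\Delta_{\max})$ if $\rho_k>\eta_2$, $\Delta_k$ otherwise; $\boldsymbol{x}_{k+1}$ any point of $\mathcal{C}$ with $f(\boldsymbol{x}_{k+1})\le\min(\{f(\boldsymbol{x}_k+\boldsymbol{s}_k)\}\cup\{f(\boldsymbol{x}_k+\boldsymbol{d}_i+\boldsymbol{d}_j):\boldsymbol{x}_k+\boldsymbol{d}_i+\boldsymbol{d}_j\in\mathcal{C},\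 \boldsymbol{d}_i,\boldsymbol{d}_j\text{ columns of }[\boldsymbol{0}_n\ \boldsymbol{D}_k]\})$; $\boldsymbol{D}^U_{k+1}$: select $p$ linearly independent directions among $\boldsymbol{x}_k+\boldsymbol{s}_k-\boldsymbol{x}_{k+1}$ and $\boldsymbol{x}_k+\boldsymbol{d}_i+\boldsymbol{d}_j-\boldsymbol{x}_{k+1}$, apply REMOVE$(\cdot,\Delta_{k+1},p_{\mathrm{rand}})$, delete columns of norm $>\epsilon_{\mathrm{rad}}\Delta_{k+1}$, while nonempty with $\sigma_{\min}<\epsilon_{\mathrm{geo}}$ apply REMOVE$(\cdot,\Delta_{k+1},1)$, optionally remove more by REMOVE; with $p_1$ remaining columns, $\boldsymbol{D}^R_{k+1}$ = GEN$(p-p_1,\Delta_{k+1},$ orthonormal basis of column space of $\boldsymbol{D}^U_{k+1})$, $\boldsymbol{D}_{k+1}=[\boldsymbol{D}^U_{k+1}\ \boldsymbol{D}^R_{k+1}]$. Otherwise: $\Delta_{k+1}=\gamma_{\mathrm{dec}}\Delta_k$, $\boldsymbol{x}_{k+1}=\boldsymbol{x}_k$, $\boldsymbol{D}_{k+1}=\gamma_{\mathrm{dec}}\boldsymbol{D}_k$. Stop if $\Delta_{k+1}<\Delta_{\min}$. Definition: given $\overline\Delta>0$, $\boldsymbol{x}\in\mathcal{C}$, continuously differentiable $f$ and $\boldsymbol{Q}\in\mathbb{R}^{n\times p}$ with orthonormal columns, a family $\{\widehat m_\Delta\}_{\Delta\in(0,\overline\Delta]}$ of functions $\mathbb{R}^p\to\mathbb{R}$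 is a class of $(\mathcal{C},\boldsymbol{Q})$-fully linear models of $f$ at $\boldsymbol{x}$ parameterized by $\Delta$ if there are $\kappa_{ef},\kappa_{eg}>0$ with, for all $\Delta\in(0,\overline\Delta]$ and $\widehat{\boldsymbol{s}}\in\boldsymbol{Q}^\top(\mathcal{C}-\boldsymbol{x})$, $\|\widehat{\boldsymbol{s}}\|\le\Delta$: $|f(\boldsymbol{x}+\boldsymbol{Q}\widehat{\boldsymbol{s}})-\widehat m_\Delta(\widehat{\boldsymbol{s}})|\le\kappa_{ef}\Delta^2$ and $\max_{\boldsymbol{d}\in\boldsymbol{Q}^\top(\mathcal{C}-\boldsymbol{x}),\|\boldsymbol{d}\|\le1}|(\boldsymbol{Q}^\top\nabla f(\boldsymbol{x}+\boldsymbol{Q}\widehat{\boldsymbol{s}})-\nabla\widehat m_\Delta(\widehat{\boldsymbol{s}}))^\top\boldsymbol{d}|\le\kappa_{eg}\Delta$. *)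

From HB Require Import structures.
From mathcomp Require Import all_boot all_order all_algebra.
From mathcomp Require Import all_classical all_reals all_analysis.
Set Implicit Arguments. Unset Strict Implicit. Unset Printing Implicit Defensive.
Import Order.TTheory GRing.Theory Num.Theory.
Import numFieldNormedType.Exports.
Local Open Scope classical_set_scope.
Local Open Scope ring_scope.

Section CLARSTA.
Variable R : realType.
Variable n : nat.

Definition dotv {m} (u v : 'cV[R]_m) : R := \sum_i u i 0 * v i 0.
Definition enorm {m} (v : 'cV[R]_m) : R := Num.sqrt (dotv v v).

Definition mx_of_seq (s : seq 'cV[R]_n) : 'M[R]_(n, size s) :=
  \matrix_(i < n, j < size s) (nth 0 s j) i 0.

(** Smallest singular value (for matrices with at most as many columns as rows):
    min over unit vectors v of ||M v||. *)
Definition sigma_min {m} (M : 'M[R]_(n, m)) : R :=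
  inf [set enorm (M *m v) | v in [set v : 'cV[R]_m | enorm v = 1]].

Definition convexC (C : set 'cV[R]_n) : Prop :=
  forall x y t, C x -> C y -> 0 <= t <= 1 -> C (t *: x + (1 - t) *: y).

Definition is_proj (C : set 'cV[R]_n) (y z : 'cV[R]_n) : Prop :=
  C z /\ forall w, C w -> enorm (y - z) <= enorm (y - w).

Definition is_QR {m} (D Q : 'M[R]_(n, m)) (Rm : 'M[R]_m) : Prop :=
  Q^T *m Q = 1%:M /\ Rm \in unitmx /\ D = Q *m Rm.

Definition QCx (C : set 'cV[R]_n) (x : 'cV[R]_n) {m} (Q : 'M[R]_(n, m)) : set 'cV[R]_m :=
  [set Q^T *m (z - x) | z in C].

(** GEN(q, Delta, B): B has orthonormal columns (B with 0 columns = "no Q given").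
    A is (a realization of) the random draw: any full-column-rank n x q matrix. *)
Definition GEN {m} (q : nat) (Delta : R) (B : 'M[R]_(n, m)) (out : seq 'cV[R]_n) : Prop :=
  exists A : 'M[R]_(n, q), \rank A = q /\
    exists (Qt : 'M[R]_(n, q)) (Rt : 'M[R]_q),
      is_QR (A - B *m B^T *m A) Qt Rt /\
      out = [seq Delta *: col j Qt | j <- enum 'I_q].

Definition rem_at (i : nat) (s : seq 'cV[R]_n) : seq 'cV[R]_n :=
  take i s ++ drop i.+1 s.

Definition theta (Delta : R) (s : seq 'cV[R]_n) (i : nat) : R :=
  sigma_min (mx_of_seq (rem_at i s)) *
  Num.max (enorm (nth 0 s i) ^+ 4 / Delta ^+ 4) 1.

Definition remove1 (Delta : R) (s s' : seq 'cV[R]_n) : Prop :=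
  exists i, (i < size s)%N /\
    (forall j, (j < size s)%N -> theta Delta s j <= theta Delta s i) /\
    s' = rem_at i s.

Fixpoint removeN (Delta : R) (r : nat) (s s' : seq 'cV[R]_n) : Prop :=
  match r with
  | 0%N => s' = s
  | r'.+1 => exists s1, remove1 Delta s s1 /\ removeN Delta r' s1 s'
  end.

Inductive geo_loop (Delta eps_geo : R) : seq 'cV[R]_n -> seq 'cV[R]_n -> Prop :=
| geo_stop s : (s = [::] \/ eps_geo <= sigma_min (mx_of_seq s)) ->
    geo_loop Delta eps_geo s s
| geo_go s s1 s' : s <> [::] -> sigma_min (mx_of_seq s) < eps_geo ->
    remove1 Delta s s1 -> geo_loop Delta eps_geo s1 s' -> geo_loop Delta eps_geo s s'.

Definition model_grad (f : 'cV[R]_n -> R) (x : 'cV[R]_n) {m}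
  (Q : 'M[R]_(n, m)) (Rm : 'M[R]_m) : 'cV[R]_m :=
  invmx Rm^T *m \col_(i < m) (f (x + Q *m col i Rm) - f x).

Definition model_val (f : 'cV[R]_n -> R) (x : 'cV[R]_n) {m}
  (Q : 'M[R]_(n, m)) (Rm : 'M[R]_m) (s : 'cV[R]_m) : R :=
  f (x + Q *m 0) + dotv (model_grad f x Q Rm) s.

Definition pi_m (C : set 'cV[R]_n) (x : 'cV[R]_n) {m} (Q : 'M[R]_(n, m)) (g : 'cV[R]_m) : R :=
  `| inf [set dotv g d | d in [set d | QCx C x Q d /\ enorm d <= 1]] |.

(** One iteration k of CLARSTA, from state (x, Delta, D) to (x', Delta', D').
    D, D' are the lists of columns of D_k, D_{k+1}. *)
Definition clarsta_step (C : set 'cV[R]_n) (f : 'cV[R]_n -> R) (p prand : nat)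
  (Dmax gdec : R) (ginc : nat -> R) (eta1 eta2 mu eps_rad eps_geo : R) (k : nat)
  (x : 'cV[R]_n) (Delta : R) (D : seq 'cV[R]_n)
  (x' : 'cV[R]_n) (Delta' : R) (D' : seq 'cV[R]_n) : Prop :=
  exists (Q : 'M[R]_(n, size D)) (Rm : 'M[R]_(size D)),
    is_QR (mx_of_seq D) Q Rm /\
    let g := model_grad f x Q Rm in
    if Delta <= mu * pi_m C x Q g then
      exists (sh : 'cV[R]_(size D)) (xs : 'cV[R]_n),
        (exists z, C z /\ sh = Q^T *m z) /\ enorm sh <= Delta /\
        is_proj C (x + Q *m sh) xs /\
        let s := xs - x in
        let rho := (f x - f (x + s)) /
                   (model_val f x Q Rm 0 - model_val f x Q Rm sh) in
        Delta' = (if rho < eta1 then gdec * Delta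
                  else if eta2 < rho then Num.min (ginc k * Delta) Dmax
                  else Delta) /\
        C x' /\ f x' <= f (x + s) /\
        (forall a b, a \in (0 :: D) -> b \in (0 :: D) -> C (x + a + b) ->
           f x' <= f (x + a + b)) /\
        exists (sel D1 D3 : seq 'cV[R]_n) (r : nat) (D4 : seq 'cV[R]_n)
               (m : nat) (B : 'M[R]_(n, m)) (DR : seq 'cV[R]_n),
          size sel = p /\ \rank (mx_of_seq sel) = p /\
          (forall v, v \in sel -> v = x + s - x' \/
             exists a b, a \in (0 :: D) /\ b \in (0 :: D) /\ v = x + a + b - x') /\
          removeN Delta' prand sel D1 /\
          geo_loop Delta' eps_geo [seq v <- D1 | enorm v <= eps_rad * Delta'] D3 /\
          removeN Delta' r D3 D4 /\
          B^T *m B = 1%:M /\ (B^T == (mx_of_seq D4)^T)%MS /\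
          GEN (p - size D4) Delta' B DR /\
          D' = D4 ++ DR
    else
      Delta' = gdec * Delta /\ x' = x /\ D' = map (fun d => gdec *: d) D.

(** Iterations 0..K of CLARSTA are executed with states (xs k, Ds k, Dirs k):
    initialization, and for k < K iteration k is performed and the algorithm
    does not stop (Delta_{k+1} >= Delta_min). *)
Definition clarsta_run (C : set 'cV[R]_n) (f : 'cV[R]_n -> R) (p prand : nat)
  (x0 : 'cV[R]_n) (Delta0 Dmin Dmax gdec : R) (ginc : nat -> R)
  (eta1 eta2 mu eps_rad eps_geo : R)
  (xs : nat -> 'cV[R]_n) (Ds : nat -> R) (Dirs : nat -> seq 'cV[R]_n) (K : nat) : Prop :=
  xs 0%N = x0 /\ Ds 0%N = Delta0 /\ GEN p Delta0 (0 : 'M[R]_(n, 0)) (Dirs 0%N) /\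
  forall k, (k < K)%N ->
    clarsta_step C f p prand Dmax gdec ginc eta1 eta2 mu eps_rad eps_geo k
      (xs k) (Ds k) (Dirs k) (xs k.+1) (Ds k.+1) (Dirs k.+1) /\
    Dmin <= Ds k.+1.

(** The (C,Q)-fully-linear error bounds at a single radius Delta, for a model
    mh with gradient gm (constant, the model being linear). *)
Definition fully_linear_bounds (C : set 'cV[R]_n) (f : 'cV[R]_n -> R)
  (gradf : 'cV[R]_n -> 'cV[R]_n) (x : 'cV[R]_n) {m} (Q : 'M[R]_(n, m))
  (mh : 'cV[R]_m -> R) (gm : 'cV[R]_m) (Delta kef keg : R) : Prop :=
  forall sh, QCx C x Q sh -> enorm sh <= Delta ->
    `|f (x + Q *m sh) - mh sh| <= kef * Delta ^+ 2 /\
    forall d, QCx C x Q d -> enorm d <= 1 ->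
      `|dotv (Q^T *m gradf (x + Q *m sh) - gm) d| <= keg * Delta.

End CLARSTA.

(* Along a run, the direction set D_k consists of p vectors of length at most
   eps_rad Delta_k with ||D_k c|| >= (Delta_k / M) ||c||, where
   M = max(1/eps_geo, 1/Delta_min) Delta_max: after a successful step the
   geometry loop keeps directions with sigma_min >= eps_geo >= Delta_{k+1} / M,
   the regenerated ones are Delta_{k+1} times orthonormal vectors orthogonal to
   the kept ones, and an unsuccessful step only rescales everything.
   For such a set, R_k^T (g_k - Q_k^T grad f(x_k)) is the vector of Taylor
   remainders f(x_k + d_i) - f(x_k) - grad f(x_k).d_i, each at most
   L (eps_rad Delta_k)^2 / 2, while ||R_k^-1|| <= M / Delta_k because R_k has
   the singular values of D_k.  Together with the Taylor bound
   |f(x + h) - f(x) - grad f(x).h| <= L ||h||^2 / 2 this gives the fully linear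
   bounds. *)
From HB Require Import structures.
From mathcomp Require Import all_boot all_order all_algebra.
From mathcomp Require Import all_classical all_reals all_analysis.
From mathcomp Require Import ring lra.
Import Order.TTheory GRing.Theory Num.Theory.
Import numFieldNormedType.Exports.
Local Open Scope classical_set_scope.
Local Open Scope ring_scope.
Set Implicit Arguments. Unset Strict Implicit. Unset Printing Implicit Defensive.

Section Euclidean.
Variable R : realType.

Lemma dotvC {m} (u v : 'cV[R]_m) : dotv u v = dotv v u.
Proof. by apply: eq_bigr => i _; rewrite mulrC. Qed.

Lemma dotvDl {m} (u w v : 'cV[R]_m) : dotv (u + w) v = dotv u v + dotv w v.
Proof. by rewrite /dotv -big_split; apply: eq_bigr => i _; rewrite mxE mulrDl. Qed.

Lemma dotvZl {m} a (u v : 'cV[R]_m) : dotv (a *: u) v = a * dotv u v.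
Proof. by rewrite /dotv mulr_sumr; apply: eq_bigr => i _; rewrite mxE mulrA. Qed.

Lemma dotvBl {m} (u w v : 'cV[R]_m) : dotv (u - w) v = dotv u v - dotv w v.
Proof. by rewrite dotvDl -scaleN1r dotvZl mulN1r. Qed.

Lemma dotvDr {m} (u w v : 'cV[R]_m) : dotv v (u + w) = dotv v u + dotv v w.
Proof. by rewrite !(dotvC v) dotvDl. Qed.

Lemma dotvZr {m} a (u v : 'cV[R]_m) : dotv v (a *: u) = a * dotv v u.
Proof. by rewrite !(dotvC v) dotvZl. Qed.

Lemma dotvBr {m} (u w v : 'cV[R]_m) : dotv v (u - w) = dotv v u - dotv v w.
Proof. by rewrite !(dotvC v) dotvBl. Qed.

Lemma dotv0l {m} (v : 'cV[R]_m) : dotv 0 v = 0.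
Proof. by rewrite /dotv big1 // => i _; rewrite mxE mul0r. Qed.

Lemma dotv0r {m} (v : 'cV[R]_m) : dotv v 0 = 0.
Proof. by rewrite dotvC dotv0l. Qed.

Lemma dotvv_ge0 {m} (v : 'cV[R]_m) : 0 <= dotv v v.
Proof. by apply: sumr_ge0 => i _; rewrite -expr2 sqr_ge0. Qed.

Lemma dotvv_eq0 {m} (v : 'cV[R]_m) : dotv v v = 0 -> v = 0.
Proof.
move=> /eqP; rewrite psumr_eq0 => [/allP vv0|i _]; last by rewrite -expr2 sqr_ge0.
apply/matrixP => i j; rewrite ord1 mxE.
by have /(_ (mem_index_enum i))/implyP/(_ isT) := vv0 i; rewrite mulf_eq0 orbb => /eqP.
Qed.

Lemma dotv_mulmxl {m k} (A : 'M[R]_(m, k)) u v : dotv (A *m u) v = dotv u (A^T *m v).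
Proof.
have dotvE l (a b : 'cV[R]_l) : dotv a b = (a^T *m b) 0 0.
  by rewrite !mxE; apply: eq_bigr => i _; rewrite mxE.
by rewrite !dotvE trmx_mul mulmxA.
Qed.

Lemma dotv_orthonormal {m k} (Q : 'M[R]_(m, k)) u v : Q^T *m Q = 1%:M ->
  dotv (Q *m u) (Q *m v) = dotv u v.
Proof. by move=> QtQ; rewrite dotv_mulmxl mulmxA QtQ mul1mx. Qed.

Lemma enorm_ge0 {m} (v : 'cV[R]_m) : 0 <= enorm v.
Proof. exact: sqrtr_ge0. Qed.

Lemma enorm_sqr {m} (v : 'cV[R]_m) : enorm v ^+ 2 = dotv v v.
Proof. by rewrite sqr_sqrtr // dotvv_ge0. Qed.

Lemma enormZ {m} a (v : 'cV[R]_m) : enorm (a *: v) = `|a| * enorm v.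
Proof. by rewrite /enorm dotvZl dotvZr mulrA -expr2 sqrtrM ?sqr_ge0 // sqrtr_sqr. Qed.

Lemma enormN {m} (v : 'cV[R]_m) : enorm (- v) = enorm v.
Proof. by rewrite -scaleN1r enormZ normrN1 mul1r. Qed.

Lemma enorm_orthonormal {m k} (Q : 'M[R]_(m, k)) v : Q^T *m Q = 1%:M ->
  enorm (Q *m v) = enorm v.
Proof. by move=> QtQ; rewrite /enorm dotv_orthonormal. Qed.

Lemma sqr_dotv_le {m} (u v : 'cV[R]_m) : dotv u v ^+ 2 <= dotv u u * dotv v v.
Proof.
have [v0|vv_neq0] := eqVneq (dotv v v) 0.
  by rewrite (dotvv_eq0 v0) !dotv0r mulr0 expr0n.
have vv_gt0 : 0 < dotv v v by rewrite lt0r vv_neq0 dotvv_ge0.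
(* expand 0 <= |u - t v|^2 at the minimiser t = <u,v>/<v,v> *)
set t := dotv u v / dotv v v.
have tvv : t * dotv v v = dotv u v by rewrite mulfVK.
have := dotvv_ge0 (u - t *: v).
rewrite dotvBl !dotvBr !dotvZl !dotvZr (dotvC v u) => h.
have : 0 <= dotv u u - dotv u v * t.
  by move: h; rewrite (mulrA t t) -(mulrA t t (dotv v v)) tvv; lra.
by rewrite subr_ge0 /t mulrA -expr2 ler_pdivrMr.
Qed.

Lemma normr_dotv_le {m} (u v : 'cV[R]_m) : `|dotv u v| <= enorm u * enorm v.
Proof.
rewrite -(@ler_pXn2r _ 2) ?nnegrE ?mulr_ge0 ?enorm_ge0 //.
by rewrite exprMn !enorm_sqr real_normK ?num_real // sqr_dotv_le.
Qed.

Lemma enorm_le_sqrt_dim {m} (v : 'cV[R]_m) (b : R) : 0 <= b ->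
  (forall i, `|v i 0| <= b) -> enorm v <= Num.sqrt m%:R * b.
Proof.
move=> b0 vb.
rewrite -(ger0_norm b0) -sqrtr_sqr -sqrtrM ?ler0n // ler_sqrt ?mulr_ge0 ?ler0n ?sqr_ge0 //.
have -> : m%:R * b ^+ 2 = \sum_(i < m) b ^+ 2 by rewrite sumr_const card_ord mulr_natl.
apply: ler_sum => i _.
by rewrite -expr2 -real_normK ?num_real // lerXn2r ?nnegrE ?normr_ge0 ?vb.
Qed.

Lemma lipschitz_const_ge0 {m k} (g : 'cV[R]_m -> 'cV[R]_k) (L : R) : (0 < m)%N ->
  (forall x y, enorm (g x - g y) <= L * enorm (x - y)) -> 0 <= L.
Proof.
move=> m_gt0 g_lip; pose y : 'cV[R]_m := const_mx 1.
have y_gt0 : 0 < enorm y.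
  rewrite sqrtr_gt0 /dotv (eq_bigr (fun=> 1)) => [|i _]; last by rewrite !mxE mulr1.
  by rewrite sumr_const card_ord ltr0n.
by have := le_trans (enorm_ge0 _) (g_lip 0 y); rewrite sub0r enormN pmulr_lge0.
Qed.

End Euclidean.

Section Taylor.
Variable R : realType.

Lemma derive_lipschitz_remainder (phi dphi : R -> R) (M : R) :
  (forall t : R, is_derive t 1 phi (dphi t)) ->
  (forall t, 0 < t < 1 -> `|dphi t - dphi 0| <= M * t) ->
  `|phi 1 - phi 0 - dphi 0| <= M / 2.
Proof.
move=> phiP dphi_lip.
(* mean value theorem for phi t - dphi 0 * t - c * t^2, used with c = +-M/2 *)
have mvt (c : R) : exists2 t : R, 0 < t < 1 &
    phi 1 - phi 0 - dphi 0 - c = dphi t - dphi 0 - c * (t + t).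
  pose psi (t : R) := phi t - (dphi 0 * t + c * (t * t)).
  have psiP (t : R) : is_derive t 1 psi (dphi t - (dphi 0 + c * (t + t))).
    have quadP : is_derive t 1 (fun t => dphi 0 * t + c * (t * t)) (dphi 0 + c * (t + t)).
      apply: is_derive_eq.
      by change (dphi 0 * 1 + c * (t * 1 + t * 1) = dphi 0 + c * (t + t)); rewrite !mulr1.
    exact: is_deriveB.
  have psi_cont : {within `[0, 1], continuous psi}.
    by apply: derivable_within_continuous => t _; have [] := psiP t.
  have [t t01 psi01] := MVT ltr01 (fun t _ => psiP t) psi_cont.
  exists t; first by move: t01; rewrite in_itv.
  by move: psi01; rewrite /psi !(mul0r, mulr0, mul1r, mulr1, addr0, subr0); lra.
have [t t01 eq_t] := mvt (M / 2); have [s s01 eq_s] := mvt (- (M / 2)).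
have := dphi_lip s s01; have := dphi_lip t t01.
case/andP: t01 s01 => t0 t1 /andP[s0 s1].
by rewrite !ler_norml => /andP[_ lt] /andP[ls _]; apply/andP; split; nra.
Qed.

Variables (n : nat) (f : 'cV[R]_n -> R) (gradf : 'cV[R]_n -> 'cV[R]_n) (L : R).
Hypothesis gradfP : forall x, differentiable f x /\ forall v, 'd f x v = dotv (gradf x) v.
Hypothesis gradf_lip : forall x y, enorm (gradf x - gradf y) <= L * enorm (x - y).

Lemma is_derive_along (x h : 'cV[R]_n) (t : R) :
  is_derive t 1 (fun t => f (x + t *: h)) (dotv (gradf (x + t *: h)) h).
Proof.
have lineP : is_diff t (fun t : R => x + t *: h) (fun t => 0 + t *: h) by apply: is_diffD.
have fP : is_diff (x + t *: h) f ('d f (x + t *: h)) by apply: DiffDef; [exact: (gradfP _).1|].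
have := is_diff_comp lineP fP.
change (fun t => f (x + t *: h)) with (f \o (fun t : R => x + t *: h)) => compP.
apply: DeriveDef; first exact/diff_derivable.
by rewrite deriveE // diff_val /= scale1r add0r (gradfP _).2.
Qed.

Lemma lipschitz_grad_remainder (x h : 'cV[R]_n) :
  `|f (x + h) - f x - dotv (gradf x) h| <= L / 2 * enorm h ^+ 2.
Proof.
have := @derive_lipschitz_remainder (fun t => f (x + t *: h))
  (fun t => dotv (gradf (x + t *: h)) h) (L * enorm h ^+ 2) (is_derive_along x h).
rewrite !scale1r !scale0r !addr0 (_ : L * _ / 2 = L / 2 * enorm h ^+ 2); last by ring.
apply=> t /andP[t0 _]; rewrite -dotvBl (le_trans (normr_dotv_le _ _)) //.
rewrite (_ : L * _ * t = L * t * enorm h * enorm h); last by ring.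
rewrite ler_wpM2r ?enorm_ge0 // (le_trans (gradf_lip _ _)) //.
by rewrite addrC addKr enormZ ger0_norm ?(ltW t0) // mulrA.
Qed.

End Taylor.

Section Poised.
Variables (R : realType) (n : nat).
Implicit Types (s : seq 'cV[R]_n) (c : nat -> R).

Definition lincomb s c : 'cV[R]_n := \sum_(0 <= j < size s) c j *: nth 0 s j.

Definition sqsum (k : nat) c : R := \sum_(0 <= j < k) c j ^+ 2.

(* sigma_min (mx_of_seq s) >= kappa, stated coefficient-wise so that it passes
   to subsequences and concatenations of s. *)
Definition poised (kappa : R) s : Prop :=
  forall c, kappa ^+ 2 * sqsum (size s) c <= enorm (lincomb s c) ^+ 2.

Lemma lincomb_nil c : lincomb [::] c = 0.
Proof. by rewrite /lincomb big_geq. Qed.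

Lemma lincomb_cons x s c : lincomb (x :: s) c = c 0%N *: x + lincomb s (c \o S).
Proof. by rewrite /lincomb big_nat_recl. Qed.

Lemma sqsum0 c : sqsum 0 c = 0.
Proof. by rewrite /sqsum big_geq. Qed.

Lemma sqsumS k c : sqsum k.+1 c = c 0%N ^+ 2 + sqsum k (c \o S).
Proof. by rewrite /sqsum big_nat_recl. Qed.

Lemma lincomb_cat s1 s2 c :
  lincomb (s1 ++ s2) c = lincomb s1 c + lincomb s2 (fun j => c (size s1 + j)%N).
Proof.
elim: s1 c => [|x s1 IH] c; first by rewrite lincomb_nil add0r.
by rewrite cat_cons !lincomb_cons IH addrA.
Qed.

Lemma sqsumD k1 k2 c : sqsum (k1 + k2) c = sqsum k1 c + sqsum k2 (fun j => c (k1 + j)%N).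
Proof.
elim: k1 c => [|k1 IH] c; first by rewrite sqsum0 add0r.
by rewrite addSn !sqsumS IH addrA.
Qed.

Lemma sqsum_ge0 k c : 0 <= sqsum k c.
Proof. by apply: sumr_ge0 => j _; apply: sqr_ge0. Qed.

Lemma lincomb_map_scale a s c : lincomb [seq a *: d | d <- s] c = a *: lincomb s c.
Proof.
elim: s c => [|x s IH] c; first by rewrite !lincomb_nil scaler0.
by rewrite map_cons !lincomb_cons IH scalerDr !scalerA mulrC.
Qed.

Lemma dotv_lincomb_eq0 s c v :
  (forall d, d \in s -> dotv d v = 0) -> dotv (lincomb s c) v = 0.
Proof.
elim: s c => [|x s IH] c sv0; first by rewrite lincomb_nil dotv0l.
rewrite lincomb_cons dotvDl dotvZl sv0 ?mem_head // mulr0 add0r IH // => d sd.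
by rewrite sv0 // in_cons sd orbT.
Qed.

Lemma lincomb_subseq s' s : subseq s' s -> forall c,
  exists c', lincomb s c' = lincomb s' c /\ sqsum (size s) c' = sqsum (size s') c.
Proof.
elim: s s' => [|x s IH] [|y s'] //= sub c.
- by exists c.
- exists (fun=> 0); rewrite lincomb_nil sqsum0 /lincomb /sqsum.
  by rewrite !big1 // => j _; rewrite ?scale0r ?expr0n.
- case: eqP sub => [<-|_] sub.
    have [c1 [lc1 sq1]] := IH _ sub (c \o S).
    exists (fun j => if j is j'.+1 then c1 j' else c 0%N).
    by rewrite !lincomb_cons sqsumS /= sqsumS lc1 sq1.
  have [c1 [lc1 sq1]] := IH _ sub c.
  exists (fun j => if j is j'.+1 then c1 j' else 0).
  by rewrite lincomb_cons sqsumS lc1 sq1 /= scale0r add0r expr0n add0r.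
Qed.

Lemma lincomb_mx s c : lincomb s c = mx_of_seq s *m \col_(j < size s) c j.
Proof.
apply/matrixP => i k; rewrite ord1 summxE big_mkord !mxE.
by apply: eq_bigr => j _; rewrite !mxE mulrC.
Qed.

Lemma sqsum_enorm k c : sqsum k c = enorm (\col_(j < k) c j) ^+ 2.
Proof.
by rewrite enorm_sqr /sqsum big_mkord; apply: eq_bigr => j _; rewrite !mxE expr2.
Qed.

Lemma lincomb_cols q (A : 'M[R]_(n, q)) c :
  lincomb [seq col j A | j <- enum 'I_q] c = A *m \col_(j < q) c j.
Proof.
apply/matrixP => i k; rewrite ord1 summxE size_map size_enum_ord big_mkord !mxE.
apply: eq_bigr => j _; rewrite (nth_map j) ?size_enum_ord // nth_ord_enum.
by rewrite !mxE mulrC.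
Qed.

Definition coefs {m} (v : 'cV[R]_m) (j : nat) : R :=
  if insub j is Some i then v i 0 else 0.

Lemma col_coefs {m} (v : 'cV[R]_m) : \col_(j < m) coefs v j = v.
Proof. by apply/matrixP => i k; rewrite ord1 mxE /coefs valK. Qed.

Lemma poisedP kappa s : 0 <= kappa ->
  poised kappa s <-> forall v, kappa * enorm v <= enorm (mx_of_seq s *m v).
Proof.
move=> kappa0; split=> [Ps v|Ps c].
  have := Ps (coefs v); rewrite lincomb_mx sqsum_enorm col_coefs -exprMn.
  by rewrite ler_pXn2r ?nnegrE ?mulr_ge0 ?enorm_ge0.
by rewrite lincomb_mx sqsum_enorm -exprMn lerXn2r ?nnegrE ?mulr_ge0 ?enorm_ge0.
Qed.

Lemma sigma_min_mul_le m (A : 'M[R]_(n, m)) v : sigma_min A * enorm v <= enorm (A *m v).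
Proof.
have [v0|v_neq0] := eqVneq (enorm v) 0; first by rewrite v0 mulr0 enorm_ge0.
have v_gt0 : 0 < enorm v by rewrite lt0r v_neq0 enorm_ge0.
set u := (enorm v)^-1 *: v.
have u1 : enorm u = 1 by rewrite enormZ ger0_norm ?invr_ge0 ?enorm_ge0 // mulVf.
have : sigma_min A <= enorm (A *m u).
  by apply: ge_inf; [exists 0 => _ [w _ <-]; rewrite enorm_ge0|exists u].
rewrite /u -scalemxAr enormZ ger0_norm ?invr_ge0 ?enorm_ge0 //.
by rewrite mulrC ler_pdivlMr // mulrC.
Qed.

Lemma poised_sigma_min kappa s :
  0 <= kappa -> kappa <= sigma_min (mx_of_seq s) -> poised kappa s.
Proof.
move=> kappa0 kappa_le; apply/poisedP => // v.
exact: le_trans (ler_wpM2r (enorm_ge0 v) kappa_le) (sigma_min_mul_le _ v).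
Qed.

Lemma poised_subseq kappa s' s : subseq s' s -> poised kappa s -> poised kappa s'.
Proof. by move=> sub Ps c; have [c' [<- <-]] := lincomb_subseq sub c. Qed.

Lemma poised_le kappa kappa' s :
  0 <= kappa <= kappa' -> poised kappa' s -> poised kappa s.
Proof.
move=> /andP[kappa0 kappa_le] Ps c; apply: le_trans (Ps c).
by rewrite ler_wpM2r ?sqsum_ge0 // lerXn2r ?nnegrE // (le_trans kappa0).
Qed.

Lemma poised_nil kappa : poised kappa [::].
Proof. by move=> c; rewrite sqsum0 mulr0 sqr_ge0. Qed.

Lemma poised_cat kappa s1 s2 :
  (forall d1 d2, d1 \in s1 -> d2 \in s2 -> dotv d1 d2 = 0) ->
  poised kappa s1 -> poised kappa s2 -> poised kappa (s1 ++ s2).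
Proof.
move=> orth P1 P2 c; rewrite lincomb_cat size_cat sqsumD enorm_sqr.
set u1 := lincomb s1 c; set u2 := lincomb s2 _.
have u12 : dotv u1 u2 = 0.
  apply: dotv_lincomb_eq0 => d1 s1d1; rewrite dotvC.
  by apply: dotv_lincomb_eq0 => d2 s2d2; rewrite dotvC orth.
rewrite dotvDl !dotvDr u12 (dotvC u2) u12 addr0 add0r mulrDr -!enorm_sqr.
exact: lerD (P1 c) (P2 _).
Qed.

Lemma poised_scale a kappa s : poised kappa s -> poised (a * kappa) [seq a *: d | d <- s].
Proof.
move=> Ps c; rewrite lincomb_map_scale size_map enormZ !exprMn -mulrA.
by rewrite -real_normK ?num_real // ler_wpM2l ?sqr_ge0.
Qed.

Lemma poised_cols q (A : 'M[R]_(n, q)) :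
  A^T *m A = 1%:M -> poised 1 [seq col j A | j <- enum 'I_q].
Proof.
move=> AtA c; rewrite size_map size_enum_ord lincomb_cols.
by rewrite enorm_orthonormal // sqsum_enorm expr1n mul1r.
Qed.

End Poised.

Section Invariant.
Variables (R : realType) (n : nat).
Implicit Types (s : seq 'cV[R]_n).

Lemma rem_at_subseq i s : subseq (rem_at i s) s.
Proof.
rewrite /rem_at -{3}(cat_take_drop i s) subseq_cat2l.
by rewrite -(add1n i) -drop_drop drop_subseq.
Qed.

Lemma remove1_subseq Dl s s' : remove1 Dl s s' -> subseq s' s.
Proof. by case=> i [_ [_ ->]]; apply: rem_at_subseq. Qed.

Lemma removeN_subseq Dl r s s' : removeN Dl r s s' -> subseq s' s.
Proof.
elim: r s => [|r IH] s /=; first by move=> ->.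
by case=> s1 [/remove1_subseq sub1 /IH sub2]; apply: subseq_trans sub2 sub1.
Qed.

Lemma geo_loop_subseq Dl e s s' : geo_loop Dl e s s' -> subseq s' s.
Proof.
elim=> [//|s0 s1 s2 _ _ /remove1_subseq sub1 _ sub2].
exact: subseq_trans sub2 sub1.
Qed.

Lemma geo_loop_poised Dl e s s' : 0 <= e -> geo_loop Dl e s s' -> poised e s'.
Proof.
move=> e0; elim=> [s0 [->|e_le]|//]; first exact: poised_nil.
exact: poised_sigma_min.
Qed.

Lemma mem_colspace m (B : 'M[R]_(n, m)) s d :
  ((mx_of_seq s)^T <= B^T)%MS -> d \in s -> exists y, d = B *m y.
Proof.
move=> /submxP [X sB] sd; have ltds : (index d s < size s)%N by rewrite index_mem.
set i := Ordinal ltds; exists (col i X^T).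
have dE : d = col i (mx_of_seq s) by apply/matrixP => a b; rewrite ord1 !mxE nth_index.
by rewrite {1}dE -(trmxK (mx_of_seq s)) sB trmx_mul trmxK !colE mulmxA.
Qed.

Lemma GEN_orthonormal m q Dl (B : 'M[R]_(n, m)) out :
  B^T *m B = 1%:M -> GEN q Dl B out ->
  exists Qt : 'M[R]_(n, q), [/\ Qt^T *m Qt = 1%:M, B^T *m Qt = 0 &
    out = [seq Dl *: d | d <- [seq col j Qt | j <- enum 'I_q]]].
Proof.
move=> BtB [A [_ [Qt [Rt [[QtQt [Rt_unit AE] ->]]]]]].
exists Qt; split; rewrite -?map_comp //.
(* the columns of Qt span those of the projection A - B B^T A, which B^T kills *)
have -> : Qt = (A - B *m B^T *m A) *m invmx Rt by rewrite AE mulmxK.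
by rewrite !mulmxA mulmxBr !mulmxA BtB mul1mx subrr mul0mx.
Qed.

Lemma enorm_col_orthonormal q (A : 'M[R]_(n, q)) j : A^T *m A = 1%:M -> enorm (col j A) = 1.
Proof.
move=> AtA; rewrite colE enorm_orthonormal // /enorm /dotv (bigD1 j) //= big1.
  by rewrite !mxE !eqxx mulr1 addr0 sqrtr1.
by move=> i /negbTE ij; rewrite !mxE ij mul0r.
Qed.

Variables (p : nat) (Dmax eps_rad M : R).
Hypotheses (eps_rad_ge1 : 1 <= eps_rad) (M_ge1 : 1 <= M).

Definition clarsta_inv (Dl : R) (D : seq 'cV[R]_n) : Prop :=
  [/\ 0 < Dl <= Dmax, size D = p, forall d, d \in D -> enorm d <= eps_rad * Dl
    & poised (Dl / M) D].

Lemma clarsta_inv_cat_GEN Dl D4 m (B : 'M[R]_(n, m)) DR :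
  0 < Dl <= Dmax -> (size D4 <= p)%N -> (forall d, d \in D4 -> enorm d <= eps_rad * Dl) ->
  poised (Dl / M) D4 -> B^T *m B = 1%:M -> ((mx_of_seq D4)^T <= B^T)%MS ->
  GEN (p - size D4) Dl B DR -> clarsta_inv Dl (D4 ++ DR).
Proof.
move=> DlP size4 norm4 poised4 BtB D4B /(GEN_orthonormal BtB) [Qt [QtQt BtQt ->]].
have Dl0 : 0 <= Dl by case/andP: DlP => /ltW.
have M0 : 0 < M by apply: lt_le_trans M_ge1.
split=> //.
- by rewrite size_cat !size_map -enumT size_enum_ord subnKC.
- move=> d; rewrite mem_cat => /orP[/norm4 //|/mapP [_ /mapP [j _ ->] ->]].
  by rewrite enormZ enorm_col_orthonormal // ger0_norm // mulr1 ler_peMl.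
apply: poised_cat => //.
  move=> d1 d2 /(mem_colspace D4B) [y ->] /mapP [_ /mapP [j _ ->] ->].
  by rewrite dotv_mulmxl -scalemxAr dotvZr colE mulmxA BtQt mul0mx dotv0r mulr0.
apply: (@poised_le _ _ _ (Dl * 1)); last exact/poised_scale/poised_cols.
by rewrite divr_ge0 ?(ltW M0) //= mulr1 ler_pdivrMr // ler_peMr.
Qed.

Lemma clarsta_inv_GEN Dl D : 0 < Dl <= Dmax -> GEN p Dl (0 : 'M[R]_(n, 0)) D -> clarsta_inv Dl D.
Proof.
move=> DlP gen; have := @clarsta_inv_cat_GEN Dl [::] 0 0 D; rewrite subn0; apply=> //.
- exact: poised_nil.
- by apply/matrixP => -[].
- by rewrite [X in (X <= _)%MS]flatmx0 sub0mx.
Qed.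

Lemma clarsta_inv_shrink gdec Dl D :
  0 < gdec < 1 -> clarsta_inv Dl D -> clarsta_inv (gdec * Dl) [seq gdec *: d | d <- D].
Proof.
move=> /andP[gdec0 gdec1] [/andP[Dl0 DlDmax] sizeD normD poisedD]; split.
- by rewrite mulr_gt0 //= (le_trans _ DlDmax) // ler_piMl ?(ltW Dl0) ?(ltW gdec1).
- by rewrite size_map.
- move=> _ /mapP [d Dd ->]; rewrite enormZ ger0_norm ?(ltW gdec0) // mulrCA.
  by rewrite ler_wpM2l ?(ltW gdec0) ?normD.
by rewrite -mulrA; apply: poised_scale.
Qed.

Lemma clarsta_step_inv C f prand Dmin gdec ginc eta1 eta2 mu eps_geo k x Dl D x' Dl' D' :
  0 < gdec < 1 -> 0 < Dmin -> Dmax / M <= eps_geo ->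
  clarsta_step C f p prand Dmax gdec ginc eta1 eta2 mu eps_rad eps_geo k x Dl D x' Dl' D' ->
  Dmin <= Dl' -> clarsta_inv Dl D -> clarsta_inv Dl' D'.
Proof.
move=> gdec01 Dmin0 geoM [Q [Rm [_ step]]] Dmin_le invD.
have Dl'0 : 0 < Dl' by apply: lt_le_trans Dmin_le.
move: step => /=; case: ifP => _; last by case=> -> [_ ->]; apply: clarsta_inv_shrink.
case=> sh [xs [_ [_ [_ [Dl'E [_ [_ [_ H]]]]]]]].
move: H => [sel [D1 [D3 [r [D4 [m [B [DR H]]]]]]]].
move: H => [size_sel [_ [_ [rem1 [geo [rem2 [BtB [/andP[_ D4B] [gen ->]]]]]]]]].
case: invD => /andP[Dl0 DlDmax] _ _ _.
have Dl'Dmax : Dl' <= Dmax.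
  have /andP[_ gdec1] := gdec01.
  rewrite Dl'E; case: ifP => _.
    by rewrite (le_trans _ DlDmax) // ler_piMl ?(ltW Dl0) ?(ltW gdec1).
  by case: ifP => _ //; rewrite ge_min lexx orbT.
have M0 : 0 < M by apply: lt_le_trans M_ge1.
have sub4 : subseq D4 [seq v <- D1 | enorm v <= eps_rad * Dl'].
  exact: subseq_trans (removeN_subseq rem2) (geo_loop_subseq geo).
apply: clarsta_inv_cat_GEN gen; rewrite ?Dl'0 //.
- rewrite -size_sel size_subseq // (subseq_trans sub4) //.
  exact: subseq_trans (filter_subseq _ _) (removeN_subseq rem1).
- by move=> d /(mem_subseq sub4); rewrite mem_filter => /andP[].
have geo0 : 0 <= eps_geo.
  by rewrite (le_trans _ geoM) // divr_ge0 ?(ltW M0) // (le_trans (ltW Dl'0)).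
apply: poised_le (poised_subseq (removeN_subseq rem2) (geo_loop_poised geo0 geo)).
by rewrite divr_ge0 ?(ltW Dl'0) ?(ltW M0) //= (le_trans _ geoM) // ler_pM2r ?invr_gt0.
Qed.

Lemma clarsta_run_inv C f prand x0 Delta0 Dmin gdec ginc eta1 eta2 mu eps_geo xs Ds Dirs K :
  0 < Delta0 <= Dmax -> 0 < gdec < 1 -> 0 < Dmin -> Dmax / M <= eps_geo ->
  clarsta_run C f p prand x0 Delta0 Dmin Dmax gdec ginc eta1 eta2 mu eps_rad eps_geo
    xs Ds Dirs K ->
  forall k, (k <= K)%N -> clarsta_inv (Ds k) (Dirs k).
Proof.
move=> Delta0P gdec01 Dmin0 geoM [_ [Ds0 [gen0 steps]]].
elim=> [_|k IH ltkK]; first by rewrite Ds0; apply: clarsta_inv_GEN.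
have [step Dmin_le] := steps k ltkK.
exact: clarsta_step_inv step Dmin_le (IH (ltnW ltkK)).
Qed.

End Invariant.

Section FullyLinear.
Variables (R : realType) (n : nat) (f : 'cV[R]_n -> R) (gradf : 'cV[R]_n -> 'cV[R]_n) (L : R).
Hypothesis gradfP : forall x, differentiable f x /\ forall v, 'd f x v = dotv (gradf x) v.
Hypothesis gradf_lip : forall x y, enorm (gradf x - gradf y) <= L * enorm (x - y).
Hypothesis L0 : 0 <= L.
Variables (x : 'cV[R]_n) (D : seq 'cV[R]_n) (Q : 'M[R]_(n, size D)) (Rm : 'M[R]_(size D)).
Hypothesis QR : is_QR (mx_of_seq D) Q Rm.

Lemma model_grad_residual :
  Rm^T *m (model_grad f x Q Rm - Q^T *m gradf x) =
  \col_i (f (x + nth 0 D i) - f x - dotv (gradf x) (nth 0 D i)).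
Proof.
case: QR => _ [Rm_unit DE]; apply/matrixP => i k; rewrite ord1.
rewrite mulmxBr /model_grad mulmxA mulmxV ?unitmx_tr // mul1mx mulmxA -trmx_mul -DE !mxE.
have -> : Q *m col i Rm = nth 0 D i.
  by apply/matrixP => a b; rewrite ord1 colE mulmxA -colE -DE !mxE.
by congr (_ - _); apply: eq_bigr => j _; rewrite !mxE mulrC.
Qed.

Variables (Dl rho M : R).
Hypotheses (Dl0 : 0 < Dl) (M0 : 0 < M) (rho0 : 0 <= rho).
Hypothesis normD : forall d, d \in D -> enorm d <= rho * Dl.
Hypothesis poisedD : poised (Dl / M) D.

Lemma model_grad_error w :
  `|dotv (model_grad f x Q Rm - Q^T *m gradf x) w| <=
    Num.sqrt (size D)%:R * L / 2 * rho ^+ 2 * M * Dl * enorm w.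
Proof.
case: (QR) => QtQ [Rm_unit DE].
set u := invmx Rm *m w; have wE : w = Rm *m u by rewrite mulKVmx.
rewrite {1}wE dotvC dotv_mulmxl dotvC model_grad_residual.
set e := \col_i _; set B := L / 2 * (rho * Dl) ^+ 2.
have B0 : 0 <= B by rewrite mulr_ge0 ?sqr_ge0 ?divr_ge0.
have normE : enorm e <= Num.sqrt (size D)%:R * B.
  apply: enorm_le_sqrt_dim => // i; rewrite mxE.
  apply: le_trans (lipschitz_grad_remainder gradfP gradf_lip _ _) _.
  rewrite ler_wpM2l ?divr_ge0 // lerXn2r ?nnegrE ?enorm_ge0 ?mulr_ge0 ?(ltW Dl0) //.
  by rewrite normD // mem_nth.
have normU : enorm u <= M / Dl * enorm w.
  have /poisedP := poisedD; rewrite divr_ge0 ?(ltW Dl0) ?(ltW M0) // => /(_ isT u).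
  rewrite DE -mulmxA -wE enorm_orthonormal // => le_w.
  by rewrite -invf_div mulrC ler_pdivlMr ?divr_gt0 // mulrC.
apply: le_trans (normr_dotv_le e u) _.
apply: le_trans (ler_pM (enorm_ge0 _) (enorm_ge0 _) normE normU) _.
by rewrite /B le_eqVlt; apply/orP; left; apply/eqP; field; rewrite lt0r_neq0.
Qed.

Lemma fully_linear_poised C :
  fully_linear_bounds C f gradf x Q (model_val f x Q Rm) (model_grad f x Q Rm) Dl
    (L / 2 * (1 + Num.sqrt (size D)%:R * rho ^+ 2 * M))
    (L / 2 * (2 + Num.sqrt (size D)%:R * rho ^+ 2 * M)).
Proof.
case: (QR) => QtQ _; move=> sh _ sh_le.
set g := model_grad f x Q Rm; set gx := Q^T *m gradf x.
set E := Num.sqrt (size D)%:R * L / 2 * rho ^+ 2 * M * Dl.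
have E0 : 0 <= E by rewrite !mulr_ge0 ?sqrtr_ge0 ?invr_ge0 ?sqr_ge0 ?(ltW M0) ?(ltW Dl0).
have normQ v : enorm (Q *m v) = enorm v by rewrite enorm_orthonormal.
split.
  have -> : f (x + Q *m sh) - model_val f x Q Rm sh =
      (f (x + Q *m sh) - f x - dotv (gradf x) (Q *m sh)) - dotv (g - gx) sh.
    by rewrite /model_val mulmx0 addr0 dotvBl /gx dotv_mulmxl trmxK; ring.
  apply: le_trans (ler_normB _ _) _.
  apply: le_trans (lerD (lipschitz_grad_remainder gradfP gradf_lip _ _)
                        (model_grad_error sh)) _.
  rewrite normQ [leRHS](_ : _ = L / 2 * Dl ^+ 2 + E * Dl); last by rewrite /E; ring.
  by rewrite lerD ?ler_wpM2l ?lerXn2r ?nnegrE ?enorm_ge0 ?(ltW Dl0) ?divr_ge0.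
move=> d _ d_le.
have -> : Q^T *m gradf (x + Q *m sh) - g = Q^T *m (gradf (x + Q *m sh) - gradf x) - (g - gx).
  by rewrite mulmxBr opprB addrA subrK.
rewrite dotvBl; apply: le_trans (ler_normB _ _) _.
rewrite [leRHS](_ : _ = L * Dl + E); last by rewrite /E; field.
apply: lerD; last by apply: le_trans (model_grad_error d) _; rewrite ler_piMr.
rewrite dotv_mulmxl trmxK; apply: le_trans (normr_dotv_le _ _) _.
rewrite normQ -[L * Dl]mulr1 ler_pM ?enorm_ge0 //.
by rewrite (le_trans (gradf_lip _ _)) // addrC addKr normQ ler_wpM2l.
Qed.

End FullyLinear.

Lemma fully_linear_bounds_le (R : realType) n C f gradf (x : 'cV[R]_n) m
    (Q : 'M[R]_(n, m)) mh gm Dl kef keg kef' keg' :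
  fully_linear_bounds C f gradf x Q mh gm Dl kef keg ->
  0 <= Dl -> kef <= kef' -> keg <= keg' ->
  fully_linear_bounds C f gradf x Q mh gm Dl kef' keg'.
Proof.
move=> FL Dl0 kef_le keg_le sh Csh sh_le; have [val_le grad_le] := FL sh Csh sh_le.
split=> [|d Cd d_le]; first by rewrite (le_trans val_le) // ler_wpM2r ?sqr_ge0.
by rewrite (le_trans (grad_le d Cd d_le)) // ler_wpM2r.
Qed.

Lemma fully_linear_consts_le (R : realType) (L s M rho : R) :
  0 <= L -> 0 <= s -> 0 <= M -> 1 <= rho ->
  L / 2 * (1 + s * rho ^+ 2 * M) <= 2^-1 * L * (1 + s * (M * rho)) * rho ^+ 2 /\
  L / 2 * (2 + s * rho ^+ 2 * M) <= 2^-1 * L * (2 + s * (M * rho)) * rho.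
Proof.
move=> L0 s0 M0 rho_ge1; have sM0 : 0 <= s * rho ^+ 2 * M := mulr_ge0 (mulr_ge0 s0 (sqr_ge0 _)) M0.
split.
  rewrite [leRHS](_ : _ = L / 2 * (rho ^+ 2 + s * rho ^+ 2 * M * rho)); last by ring.
  by rewrite ler_wpM2l ?divr_ge0 // lerD ?exprn_ege1 // ler_peMr.
rewrite [leRHS](_ : _ = L / 2 * (2 * rho + s * rho ^+ 2 * M)); last by ring.
by rewrite ler_wpM2l ?divr_ge0 // lerD // ler_peMr.
Qed.

Lemma geometry_scale_bounds (R : realType) (eps_geo Dmin Dmax : R) :
  0 < eps_geo -> 0 < Dmin -> Dmin <= Dmax ->
  let M := Num.max eps_geo^-1 Dmin^-1 * Dmax in 1 <= M /\ Dmax / M <= eps_geo.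
Proof.
move=> eps_geo_gt0 Dmin_gt0 Dmin_le M.
have Dmax_gt0 : 0 < Dmax by apply: lt_le_trans Dmin_le.
have M_ge1 : 1 <= M.
  rewrite -(mulVf (lt0r_neq0 Dmax_gt0)) ler_wpM2r ?(ltW Dmax_gt0) // le_max.
  by rewrite [X in _ || X]lef_pV2 ?posrE // Dmin_le orbT.
split=> //; rewrite ler_pdivrMr ?(lt_le_trans ltr01) // /M mulrA -[leLHS]mul1r.
rewrite ler_wpM2r ?(ltW Dmax_gt0) // -(mulfV (lt0r_neq0 eps_geo_gt0)).
by rewrite ler_wpM2l ?(ltW eps_geo_gt0) // le_max lexx.
Qed.

Theorem mainTheorem6 (R : realType) (n p prand : nat)
  (C : set 'cV[R]_n) (f : 'cV[R]_n -> R) (gradf : 'cV[R]_n -> 'cV[R]_n) (L : R)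
  (x0 : 'cV[R]_n) (Delta0 Dmin Dmax gdec : R) (ginc : nat -> R)
  (eta1 eta2 mu eps_rad eps_geo : R)
  (xs : nat -> 'cV[R]_n) (Ds : nat -> R) (Dirs : nat -> seq 'cV[R]_n) (K : nat) :
  closed C -> convexC C -> interior C !=set0 ->
  (forall x, differentiable f x /\ forall v, 'd f x v = dotv (gradf x) v) ->
  continuous gradf ->
  (forall x y, enorm (gradf x - gradf y) <= L * enorm (x - y)) ->
  (1 <= prand)%N -> (prand <= p)%N -> (p <= n)%N ->
  C x0 -> 0 < Delta0 -> 0 < Dmin -> Dmin <= Dmax -> Delta0 <= Dmax ->
  0 < gdec < 1 -> (forall k, 1 <= ginc k) ->
  0 < eta1 -> eta1 <= eta2 -> eta2 < 1 -> 0 < mu ->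
  1 <= eps_rad -> 0 < eps_geo ->
  clarsta_run C f p prand x0 Delta0 Dmin Dmax gdec ginc eta1 eta2 mu eps_rad eps_geo
    xs Ds Dirs K ->
  let MR := Num.max eps_geo^-1 Dmin^-1 * eps_rad * Dmax in
  let kef := (2^-1 * L * (1 + Num.sqrt (p%:R) * MR)) * eps_rad ^+ 2 in
  let keg := (2^-1 * L * (2 + Num.sqrt (p%:R) * MR)) * eps_rad in
  0 < Ds K <= Dmax /\
  forall (Q : 'M[R]_(n, size (Dirs K))) (Rm : 'M[R]_(size (Dirs K))),
    is_QR (mx_of_seq (Dirs K)) Q Rm ->
    fully_linear_bounds C f gradf (xs K) Q
      (model_val f (xs K) Q Rm) (model_grad f (xs K) Q Rm) (Ds K) kef keg.
Proof.
move=> _ _ _ gradfP _ gradf_lip prand_gt0 prand_le p_le _ Delta0_gt0 Dmin_gt0 Dmin_le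
  Delta0_le gdec01 _ _ _ _ _ eps_rad_ge1 eps_geo_gt0 run MR kef keg.
set M := Num.max eps_geo^-1 Dmin^-1 * Dmax.
have [M_ge1 geoM] := geometry_scale_bounds eps_geo_gt0 Dmin_gt0 Dmin_le.
have L0 : 0 <= L.
  exact: lipschitz_const_ge0 (leq_trans prand_gt0 (leq_trans prand_le p_le)) gradf_lip.
have Delta0P : 0 < Delta0 <= Dmax by rewrite Delta0_gt0.
have [/andP[DK_gt0 DK_le] sizeK normK poisedK] :=
  clarsta_run_inv eps_rad_ge1 M_ge1 Delta0P gdec01 Dmin_gt0 geoM run (leqnn K).
split=> [|Q Rm QR]; first by rewrite DK_gt0.
have rho0 : 0 <= eps_rad by apply: le_trans eps_rad_ge1.
have FL := fully_linear_poised gradfP gradf_lip L0 QR DK_gt0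
  (lt_le_trans ltr01 M_ge1) rho0 normK poisedK.
have MRE : MR = M * eps_rad by rewrite /MR /M; ring.
have [kef_le keg_le] :=
  fully_linear_consts_le L0 (sqrtr_ge0 p%:R) (le_trans ler01 M_ge1) eps_rad_ge1.
by apply: (fully_linear_bounds_le (FL _ _) (ltW DK_gt0)); rewrite sizeK /kef /keg MRE.
Qed.
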